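(* Let $\kappa$ and $\lambda$ be infinite cardinals with $\kappa^{<\lambda}=\kappa\geq\lambda$, and let $P$ be the set of all partial functions from $\kappa$ to $\kappa$ of cardinality less than $\lambda$. Let $d\geq1$ and let $\kappa_1,\dots,\kappa_d$ be cardinals such that $\kappa_1=\kappa^+$ and, for every $i<d$, there is a cardinal $\mu_i\geq 2^{\kappa_i}$ with $\kappa_{i+1}=\mu_i^+$ and $\mu_i^{\kappa_i}=\mu_i$. Then for every function $p:\kappa_1\times\cdots\times\kappa_d\to P$ there exist stationary sets $\kappa_1'\subseteq\kappa_1,\dots,\kappa_d'\subseteq\kappa_d$ such that $\bigcup p[\kappa_1'\times\cdots\times\kappa_d']$ is a function.
   Context: Partial functions are identified with their graphs; $p[A]$ denotes the image $\{p(x):x\in A\}$. A subset of a regular uncountable cardinal $\nu$ is stationary if it meets every closed unbounded subset of $\nu$. $\kappa^{<\lambda}=\sup_{\nu<\lambda}\kappa^\nu$. *)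

(* Cardinals are modelled by types
   (cardinality = existence of injections); the ordinals kappa_i carrying
   stationarity are modelled by well-ordered types of the right order type. *)
From mathcomp Require Import all_boot.

Definition inj (A B : Type) : Prop :=
  exists f : A -> B, forall x y, f x = f y -> x = y.

Definition infinite (A : Type) : Prop := inj nat A.

Definition lt_card (A B : Type) : Prop := inj A B /\ ~ inj B A.

Definition strict_wellorder (W : Type) (lt : W -> W -> Prop) : Prop :=
  (forall x, ~ lt x x) /\
  (forall x y z, lt x y -> lt y z -> lt x z) /\
  (forall x y, lt x y \/ x = y \/ lt y x) /\
  well_founded lt.

(* (W, lt) is (order-isomorphic to) the ordinal |M|^+ : a well-order all of
   whose proper initial segments have size <= |M|, while |W| > |M|. *)
Definition is_succ_card (M W : Type) (lt : W -> W -> Prop) : Prop :=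
  strict_wellorder W lt /\
  (forall x : W, inj {y : W | lt y x} M) /\
  ~ inj W M.

Definition club (W : Type) (lt : W -> W -> Prop) (C : W -> Prop) : Prop :=
  (forall x, exists y, C y /\ lt x y) /\
  (forall x, (exists y, lt y x) ->
             (forall y, lt y x -> exists z, C z /\ lt y z /\ lt z x) ->
             C x).

Definition stationary (W : Type) (lt : W -> W -> Prop) (S : W -> Prop) : Prop :=
  forall C, club W lt C -> exists x, C x /\ S x.

(* kappa^{<lambda} <= kappa : for every nu < lambda (a subset of L of size < |L|),
   kappa^nu <= kappa. *)
Definition pow_below_le (K L : Type) : Prop :=
  forall S : L -> Prop, ~ inj L {x : L | S x} -> inj ({x : L | S x} -> K) K.

(* functional relations (partial functions given by their graphs) *)
Definition functional {A B : Type} (r : A -> B -> Prop) : Prop :=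
  forall a b c, r a b -> r a c -> b = c.

Definition small_pfun (K L : Type) : Type :=
  { r : K -> K -> Prop |
    functional r /\ lt_card {xy : K * K | r xy.1 xy.2} L }.

(* The function p is in fact constant on a product of stationary sets.  Partial functions
   of size < lambda are coded by functions from an ordinal < lambda into kappa, so
   |P| <= kappa^{<lambda} = kappa.  Fix the last coordinate: a |-> p(., a) maps kappa_d into
   the functions kappa_1 x ... x kappa_{d-1} -> P, a set of size <= mu_{d-1} (by
   mu_i^{kappa_i} = mu_i), hence of size < kappa_d.  The club filter of the regular
   kappa_d = mu_{d-1}^+ is closed under mu_{d-1}-fold intersections, so one fibre is
   stationary; recurse on the remaining coordinates with a point of that fibre. *)
From mathcomp Require Import all_boot.
From Stdlib Require Import PeanoNat Classical ClassicalEpsilon.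
From Stdlib Require Import FunctionalExtensionality PropExtensionality ProofIrrelevance.

Notation seg R a := {y | R y a}.

Lemma inj_trans {A B C : Type} : inj A B -> inj B C -> inj A C.
Proof. by move=> [f hf] [g hg]; exists (fun x => g (f x)) => x y /hg /hf. Qed.

Lemma sig_eq {A : Type} {P : A -> Prop} (x y : {a | P a}) :
  proj1_sig x = proj1_sig y -> x = y.
Proof. by case: x => x hx; case: y => y hy /= E; subst; rewrite (proof_irrelevance _ hx hy). Qed.

Lemma inj_sig {A : Type} (P : A -> Prop) : inj {x | P x} A.
Proof. by exists (@proj1_sig _ _) => x y /sig_eq. Qed.

Lemma inj_fun_codom {D A B : Type} : inj A B -> inj (D -> A) (D -> B).
Proof.
move=> [f hf]; exists (fun g x => f (g x)) => g1 g2 E.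
by apply: functional_extensionality => x; apply: hf; apply: (f_equal (fun h => h x) E).
Qed.

Lemma inj_option {A B : Type} : inj A B -> inj (option A) (option B).
Proof.
move=> [f hf]; exists (omap f).
by move=> [a|] [b|] //= [] /hf ->.
Qed.

Lemma inj_pred {A : Type} : inj A (A -> Prop).
Proof. by exists (fun a b => b = a) => a b /(f_equal (fun P => P a)) /= <-. Qed.

Lemma infinite_two {A : Type} : infinite A -> exists a b : A, a <> b.
Proof. by move=> [e he]; exists (e 0), (e 1) => /he. Qed.

Lemma inj_square_fun {A B : Type} (a0 a1 : A) : a0 <> a1 -> inj (B * B) (A -> B).
Proof.
move=> ne.
exists (fun p a => if excluded_middle_informative (a = a0) then p.1 else p.2).
move=> [b1 b2] [b1' b2'] E.
move: (f_equal (fun h => h a0) E) (f_equal (fun h => h a1) E) => {E} /=.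
case: excluded_middle_informative => [_|[]//] /= ->.
by case: excluded_middle_informative => [/esym/ne[] | _ /= ->].
Qed.

Lemma inj_option_of_square {A : Type} : infinite A -> inj (A * A) A -> inj (option A) A.
Proof.
move=> hA [c hc]; have [a0 [a1 ne]] := infinite_two hA.
exists (fun o => if o is Some a then c (a, a0) else c (a0, a1)).
move=> [x|] [y|] // /hc [] => *; subst => //.
Qed.

Lemma inj_sigT {I C D : Type} (F : I -> Type) :
  inj I C -> (forall i, inj (F i) D) -> inj {i : I & F i} (C * D).
Proof.
move=> [f hf] hF.
have e i : {e : F i -> D | forall x y, e x = e y -> x = y}.
  exact/constructive_indefinite_description/hF.
exists (fun s => (f (projT1 s), proj1_sig (e (projT1 s)) (projT2 s))).
move=> [i x] [j y] /= [/hf Eij]; subst j.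
by move=> /(proj2_sig (e i)) ->.
Qed.

Lemma wf_min {A : Type} (R : A -> A -> Prop) (P : A -> Prop) :
  well_founded R -> (exists x, P x) -> exists m, P m /\ forall y, R y m -> ~ P y.
Proof.
move=> wf [x px]; apply: NNPP => H.
suff : forall z, ~ P z by move/(_ x).
move=> z; elim: (wf z) => {}z _ IH pz; apply: H; exists z; split=> // y Ryz; exact: IH.
Qed.

(** * Comparing well-orders *)

Section WellOrderComparison.
Variables (A B : Type) (R : A -> A -> Prop).
Hypothesis hR : strict_wellorder A R.

Definition fresh_step (a : A) (rec : forall a', R a' a -> option B) : option B :=
  match excluded_middle_informative
          (exists b, ~ exists a' (h : R a' a), rec a' h = Some b) with
  | left H => Some (proj1_sig (constructive_indefinite_description _ H))
  | right _ => None
  end.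

(* Enumerate B along A, each time choosing a value not yet used; [None] marks exhaustion. *)
Lemma wellorder_enum : exists f : A -> option B,
  (forall x y c, f x = Some c -> f y = Some c -> x = y) /\
  (forall x, f x = None -> forall c, exists y, R y x /\ f y = Some c).
Proof.
have [_ [_ [tot wf]]] := hR.
pose f := Fix wf (fun _ => option B) fresh_step.
have fE a : f a = fresh_step a (fun a' _ => f a').
  rewrite /f Fix_eq // => x g1 g2 E; congr fresh_step.
  by apply: functional_extensionality_dep => y; apply: functional_extensionality_dep.
have fresh x y c : R x y -> f x = Some c -> f y <> Some c.
  move=> Rxy fx; rewrite fE /fresh_step; case: excluded_middle_informative => [H|//].
  case: (constructive_indefinite_description _ H) => b /= hb [Eb]; subst b.
  by apply: hb; exists x, Rxy.
exists f; split.
- move=> x y c fx fy; case: (tot x y) => [Rxy|[//|Ryx]].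
  + by case: (fresh _ _ _ Rxy fx fy).
  + by case: (fresh _ _ _ Ryx fy fx).
- move=> x; rewrite fE /fresh_step; case: excluded_middle_informative => [//|H] _ c.
  by apply: NNPP => nc; apply: H; exists c => [[a' [h e]]]; apply: nc; exists a'.
Qed.

Lemma wellorder_inj_or_seg (P : A -> Prop) :
  inj {x | P x} B \/ exists x, P x /\ inj B (seg R x).
Proof.
have [f [f_inj f_none]] := wellorder_enum.
case: (classic (exists x, P x /\ f x = None)) => [[x [Px fx]]|H].
- right; exists x; split => //.
  have ex c : {y | R y x /\ f y = Some c}.
    exact/constructive_indefinite_description/f_none.
  exists (fun c => exist (fun y => R y x) (proj1_sig (ex c)) (proj1 (proj2_sig (ex c)))).
  move=> c1 c2 /(f_equal (@proj1_sig _ _)) /= E.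
  by move: (proj2 (proj2_sig (ex c1))) (proj2 (proj2_sig (ex c2))); rewrite E => -> [].
- left.
  have ex (x : {x | P x}) : {b | f (proj1_sig x) = Some b}.
    case: x => x Px; apply: constructive_indefinite_description.
    by case E: (f x) => [b|]; [exists b | case: H; exists x].
  exists (fun x => proj1_sig (ex x)) => x y E; apply: sig_eq.
  apply: (f_inj _ _ (proj1_sig (ex x))); first exact: proj2_sig (ex x).
  by rewrite E; exact: proj2_sig (ex y).
Qed.

Lemma wellorder_inj_or_inj_seg : inj A B \/ exists x, inj B (seg R x).
Proof.
case: (wellorder_inj_or_seg (fun _ => True)) => [h|[x [_ h]]]; last by right; exists x.
by left; apply: inj_trans h; exists (fun x => exist (fun _ => True) x I) => x y [].
Qed.

End WellOrderComparison.

(** * Successor cardinals and stationary sets *)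

Lemma inj_prod_l {A B C : Type} : inj A B -> inj (A * C) (B * C).
Proof. by move=> [f hf]; exists (fun p => (f p.1, p.2)) => [[a c] [a' c']] [/hf -> ->]. Qed.

Lemma succ_card_inj {M W : Type} {R : W -> W -> Prop} : is_succ_card M W R -> inj M W.
Proof.
move=> [hR [_ nWM]]; case: (wellorder_inj_or_inj_seg _ M _ hR) => [/nWM[]|[x h]].
exact: inj_trans h (inj_sig _).
Qed.

Lemma inj_of_cofinal {W M I : Type} (R : W -> W -> Prop) (f : I -> W) :
  (forall x, inj (seg R x) M) -> (forall w, exists i, R w (f i)) -> inj W (I * M).
Proof.
move=> hseg hcof.
have e x : {e : seg R x -> M | forall u v, e u = e v -> u = v}.
  exact/constructive_indefinite_description/hseg.
have ch w : {i | R w (f i)} by exact/constructive_indefinite_description/hcof.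
exists (fun w => let: exist i hi := ch w in (i, proj1_sig (e (f i)) (exist _ w hi))).
move=> w1 w2; case: (ch w1) => i h1; case: (ch w2) => j h2 [Eij]; subst j.
by move=> /(proj2_sig (e (f i))) [].
Qed.

(* Under choice [inj (M * M) M] holds for every infinite [M]; here it is assumed. *)
Definition infinite_succ_card (M W : Type) (R : W -> W -> Prop) : Prop :=
  is_succ_card M W R /\ inj (M * M) M /\ infinite M.

Section InfiniteSuccCard.
Variables (M W : Type) (R : W -> W -> Prop).
Hypothesis hW : infinite_succ_card M W R.

Lemma succ_card_inhabited : inhabited W.
Proof.
have [hs [_ [e _]]] := hW; have [g _] := succ_card_inj hs.
exact: inhabits (g (e 0)).
Qed.

Lemma succ_card_unbounded w : exists w', R w w'.
Proof.
have [[[_ [_ [tot _]]] [hseg nWM]] [hsq hM]] := hW.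
apply: NNPP => nw; apply: nWM.
have top x : ~ R x w -> x = w.
  by move=> nx; case: (tot x w) => [//|[//|h]]; case: nw; exists x.
apply: inj_trans (inj_option_of_square hM hsq); apply: inj_trans (inj_option (hseg w)).
exists (fun x => if excluded_middle_informative (R x w) is left h
                 then Some (exist _ x h) else None).
move=> x y; case: (excluded_middle_informative (R x w)) => hx;
  case: (excluded_middle_informative (R y w)) => hy //=; first by case.
by rewrite (top _ hx) (top _ hy).
Qed.

Lemma succ_card_bounded {I : Type} (f : I -> W) : inj I M -> exists y, forall i, R (f i) y.
Proof.
have [[[_ [tr [tot _]]] [hseg nWM]] [hsq _]] := hW.
move=> hI; apply: NNPP => nb; apply: nWM.
apply: inj_trans (inj_trans (inj_prod_l hI) hsq).
apply: (inj_of_cofinal R f hseg) => w.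
have [w' ww'] := succ_card_unbounded w.
apply: NNPP => nw; apply: nb; exists w' => i.
by case: (tot (f i) w') => [//|[E|h]]; case: nw; exists i; [rewrite E | exact: tr ww' h].
Qed.

Lemma club_family_above {I : Type} (C : I -> W -> Prop) : inj I M ->
  (forall i, club W R (C i)) ->
  forall u, exists y, R u y /\ forall i, exists z, C i z /\ R u z /\ R z y.
Proof.
have [_ [hsq hM]] := hW.
move=> hI hC u.
have z i : {z | C i z /\ R u z}.
  exact/constructive_indefinite_description/(proj1 (hC i) u).
have hoI : inj (option I) M := inj_trans (inj_option hI) (inj_option_of_square hM hsq).
have [y hy] := succ_card_bounded (fun o => if o is Some i then proj1_sig (z i) else u) hoI.
exists y; split; first exact: hy None.
move=> i; have [? ?] := proj2_sig (z i).
by exists (proj1_sig (z i)); split; [|split; [|exact: hy (Some i)]].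
Qed.

(* The common point is the supremum of an omega-chain each of whose steps passes a point
   of every [C i]. *)
Lemma club_bigcap {I : Type} (C : I -> W -> Prop) : inj I M ->
  (forall i, club W R (C i)) -> club W R (fun w => forall i, C i w).
Proof.
have [[[_ [tr [tot wf]]] _] [_ hM]] := hW.
move=> hI hC; split; last first.
  move=> x hx hcof i; apply: (proj2 (hC i)) => // y Ryx.
  by case: (hcof y Ryx) => z [Cz h]; exists z; split => //; exact: Cz.
move=> x.
have step (u : W) := constructive_indefinite_description _ (club_family_above _ hI hC u).
pose s n := iter n (fun u => proj1_sig (step u)) x.
have [y0 hy0] := succ_card_bounded s hM.
have [m [hm mmin]] := wf_min R (fun y => forall n, R (s n) y) wf (ex_intro _ y0 hy0).
exists m; split; last exact: hm 0.
move=> i; apply: (proj2 (hC i)); first by exists x; exact: hm 0.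
move=> y Rym.
have [n hn] : exists n, ~ R (s n) y.
  by apply: NNPP => H; apply: (mmin y Rym) => n; apply: NNPP => h; apply: H; exists n.
have [z [Cz [h1 h2]]] := (proj2_sig (step (s n))).2 i.
exists z; split => //; split; last exact: tr h2 (hm n.+1).
by case: (tot (s n) y) => [//|[<-//|h]]; exact: tr h h1.
Qed.

Lemma stationary_setT : stationary W R (fun _ => True).
Proof.
move=> C [unb _]; have [w0] := succ_card_inhabited.
by have [y [Cy _]] := unb w0; exists y.
Qed.

Lemma stationary_witness (S : W -> Prop) : stationary W R S -> exists w, S w.
Proof.
move=> st; case: (st (fun _ => True)) => [|x [_ h]]; last by exists x.
split => // x; have [y h] := succ_card_unbounded x; by exists y.
Qed.

Lemma stationary_fiber {X : Type} (g : W -> X) : inj X M ->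
  exists c, stationary W R (fun w => g w = c).
Proof.
move=> hX; apply: NNPP => H.
have hC c : {C | club W R C /\ forall w, C w -> g w <> c}.
  apply: constructive_indefinite_description.
  apply: NNPP => H2; apply: H; exists c => C cC; apply: NNPP => H3; apply: H2.
  by exists C; split => // w Cw E; apply: H3; exists w.
have cl := club_bigcap _ hX (fun c => proj1 (proj2_sig (hC c))).
have [w0] := succ_card_inhabited.
have [w [Cw _]] := proj1 cl w0.
exact: (proj2 (proj2_sig (hC (g w))) w (Cw (g w)) erefl).
Qed.

End InfiniteSuccCard.

Lemma stationary_mono {W : Type} (R : W -> W -> Prop) (S1 S2 : W -> Prop) :
  (forall w, S1 w -> S2 w) -> stationary W R S1 -> stationary W R S2.
Proof. by move=> h st C cC; case: (st C cC) => x [? ?]; exists x; auto. Qed.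

(** * Partial functions of size below lambda *)

Lemma not_inj_nat_bool : ~ inj nat bool.
Proof.
move=> [f hf]; have h01 : f 0 <> f 1 by move/hf.
have h02 : f 0 <> f 2 by move/hf.
have h12 : f 1 <> f 2 by move/hf.
by move: h01 h02 h12; case: (f 0); case: (f 1); case: (f 2).
Qed.

Lemma inj_pair_bool {A : Type} (a b : A) : inj {x | x = a \/ x = b} bool.
Proof.
exists (fun s => is_left (excluded_middle_informative (proj1_sig s = a))).
move=> [x hx] [y hy] /= E; apply: sig_eq => /=; move: E.
case: excluded_middle_informative => xa; case: excluded_middle_informative => ya //= _.
- by rewrite xa ya.
- by case: hx xa => // ->; case: hy ya => // ->.
Qed.

Lemma inj_square_of_pow_below {K L : Type} : infinite L -> pow_below_le K L -> inj (K * K) K.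
Proof.
move=> hL hpow; have [l0 [l1 ne]] := infinite_two hL.
pose S l := l = l0 \/ l = l1.
have S_small : ~ inj L {l | S l}.
  by move=> hLS; apply: not_inj_nat_bool; apply: inj_trans hL (inj_trans hLS (inj_pair_bool _ _)).
apply: inj_trans (hpow S S_small).
apply: (inj_square_fun (exist S l0 (or_introl erefl)) (exist S l1 (or_intror erefl))).
by move=> [].
Qed.

Lemma graph_enum {A B T : Type} (r : A -> B -> Prop) :
  inj {ab : A * B | r ab.1 ab.2} T ->
  exists h : T -> option (A * B), forall a b, r a b <-> exists t, h t = Some (a, b).
Proof.
move=> [e he].
exists (fun t => if excluded_middle_informative (exists g, e g = t) is left H
            then Some (proj1_sig (proj1_sig (constructive_indefinite_description _ H)))
            else None).
move=> a b; split.
- move=> rab; exists (e (exist _ (a, b) rab)).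
  case: excluded_middle_informative => [H|[]]; last by eexists.
  by case: (constructive_indefinite_description _ H) => g /= /he ->.
- case=> t; case: excluded_middle_informative => [H|//] [E].
  by have := proj2_sig (proj1_sig (constructive_indefinite_description _ H)); rewrite E.
Qed.

Section SmallPartialFunctions.
Variables (K L W : Type) (R : W -> W -> Prop).
Hypotheses (hKinf : infinite K) (hLinf : infinite L) (hpow : pow_below_le K L).
Hypothesis hW : is_succ_card K W R.
(* [a] plays the role of the ordinal [lambda] inside [kappa^+]. *)
Variable a : W.
Hypotheses (ha : inj L (seg R a)) (amin : forall b, R b a -> ~ inj L (seg R b)).

Lemma seg_below_inj {b} : R b a -> inj (seg R b) L.
Proof.
move=> Rba; have [[_ [tr _]] _] := hW.
case: (wellorder_inj_or_seg _ L _ hW.1 (fun y => R y b)) => [//|[b' [Rb'b h]]].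
by case: (amin _ (tr _ _ _ Rb'b Rba) h).
Qed.

Lemma inj_seg_below (X : Type) : ~ inj L X -> exists b, R b a /\ inj X (seg R b).
Proof.
move=> nLX; case: (wellorder_inj_or_seg _ X _ hW.1 (fun y => R y a)) => [h|//].
by case: nLX; exact: inj_trans ha h.
Qed.

Lemma fun_seg_below_inj {b} : R b a -> inj (seg R b -> K) K.
Proof.
move=> Rba; have [i hi] := seg_below_inj Rba.
pose S l := exists w, i w = l.
have pre (s : {l | S l}) := constructive_indefinite_description _ (proj2_sig s).
have S_small : ~ inj L {l | S l}.
  move=> h; apply: (amin _ Rba); apply: inj_trans h _.
  exists (fun s => proj1_sig (pre s)) => s1 s2 E; apply: sig_eq.
  by rewrite -(proj2_sig (pre s1)) -(proj2_sig (pre s2)) E.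
apply: inj_trans (hpow S S_small).
exists (fun phi s => phi (proj1_sig (pre s))) => p1 p2 E.
apply: functional_extensionality => w.
have := f_equal (fun h => h (exist S (i w) (ex_intro _ w erefl))) E => /=.
suff -> : proj1_sig (pre (exist S (i w) (ex_intro _ w erefl))) = w by [].
exact/hi/(proj2_sig (pre _)).
Qed.

(* A partial function is coded by some b < a and an enumeration of its graph by seg b. *)
Lemma small_pfun_inj_at : inj (small_pfun K L) K.
Proof.
have hsq := inj_square_of_pow_below hLinf hpow.
have hopt : inj (option (K * K)) K := inj_trans (inj_option hsq) (inj_option_of_square hKinf hsq).
pose Code := {b : seg R a & seg R (proj1_sig b) -> option (K * K)}.
have code_inj : inj Code K.
  apply: inj_trans (inj_sigT _ (hW.2.1 a) _) hsq => [[b Rba]].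
  exact: inj_trans (inj_fun_codom hopt) (fun_seg_below_inj Rba).
apply: inj_trans code_inj.
have enc (r : small_pfun K L) :
    {c : Code | forall x y, proj1_sig r x y <-> exists t, projT2 c t = Some (x, y)}.
  apply: constructive_indefinite_description.
  have [b [Rba hb]] := inj_seg_below _ (proj2 (proj2 (proj2_sig r))).
  have [h hh] := graph_enum _ hb.
  by exists (existT _ (exist _ b Rba) h).
exists (fun r => proj1_sig (enc r)) => r1 r2 E; apply: sig_eq.
apply: functional_extensionality => x; apply: functional_extensionality => y.
apply: propositional_extensionality.
by split=> /(proj2_sig (enc _)) h; apply/(proj2_sig (enc _)); rewrite ?E // -E.
Qed.

End SmallPartialFunctions.

Lemma least_seg_above {L W : Type} (R : W -> W -> Prop) : strict_wellorder W R -> ~ inj W L ->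
  exists a, inj L (seg R a) /\ forall b, R b a -> ~ inj L (seg R b).
Proof.
move=> hR nWL; have [_ [_ [_ wf]]] := hR.
case: (wellorder_inj_or_inj_seg _ L _ hR) => [/nWL[]|[x hx]].
exact: wf_min R (fun a => inj L (seg R a)) wf (ex_intro _ x hx).
Qed.

Lemma small_pfun_inj {K L W : Type} (R : W -> W -> Prop) :
  infinite K -> infinite L -> pow_below_le K L -> inj L K -> is_succ_card K W R ->
  inj (small_pfun K L) K.
Proof.
move=> hK hL hpow hLK hW.
have [a [ha amin]] := least_seg_above _ hW.1 (fun hWL => hW.2.2 (inj_trans hWL hLK)).
exact: small_pfun_inj_at hK hL hpow hW _ ha amin.
Qed.

(** * Colourings of the product *)

Section ProductCoordinates.
Context {d : nat} {Kap : nat -> Type}.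
Local Notation point := (forall i : 'I_d, Kap i).

Definition upd (x : point) (j : nat) (a : Kap j) : point :=
  fun k => match Nat.eq_dec j k with
           | left e => eq_rect j Kap a k e
           | right _ => x k
           end.

Lemma upd_id (x : point) (k : 'I_d) : upd x k (x k) = x.
Proof.
apply: functional_extensionality_dep => k'; rewrite /upd.
case: Nat.eq_dec => [e|//]; have E : k = k' by apply: ord_inj.
by subst k'; rewrite (eq_irrelevance e erefl).
Qed.

Definition depends_below {X : Type} (f : point -> X) (j : nat) : Prop :=
  forall x y, (forall i : 'I_d, i < j -> x i = y i) -> f x = f y.

Lemma depends_below_upd {X : Type} (f : point -> X) j a :
  depends_below f j.+1 -> depends_below (fun x => f (upd x j a)) j.
Proof.
move=> hf x y H; apply: hf => k hk; rewrite /upd.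
case: Nat.eq_dec => [//|n]; apply: H.
by rewrite ltn_neqAle -ltnS hk andbT; apply/eqP => E; apply: n; rewrite E.
Qed.

Lemma depends_below_all {X : Type} (f : point -> X) : depends_below f d.
Proof.
move=> x y hxy; congr f.
by apply: functional_extensionality_dep => i; exact: hxy.
Qed.

Fixpoint curried (X : Type) (j : nat) : Type :=
  match j with 0 => X | j'.+1 => Kap j' -> curried X j' end.

(* The restriction of f to the first j coordinates, the others being those of x0. *)
Fixpoint curry_below {X : Type} (x0 : point) (j : nat) (f : point -> X) : curried X j :=
  match j return curried X j with
  | 0 => f x0
  | j'.+1 => fun a : Kap j' => curry_below x0 j' (fun x => f (upd x j' a))
  end.

Lemma curry_below_inj {X : Type} (x0 : point) j (f g : point -> X) : j <= d ->
  depends_below f j -> depends_below g j ->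
  curry_below x0 j f = curry_below x0 j g -> forall x, f x = g x.
Proof.
elim: j f g => [|j IH] f g hjd hf hg /= E x; first by rewrite (hf x x0) // (hg x x0).
have Eupd a : forall y, f (upd y j a) = g (upd y j a).
  apply: IH; [exact: ltnW | exact: depends_below_upd | exact: depends_below_upd |].
  exact: (congr1 (fun h => h a) E).
by have := Eupd (x (Ordinal hjd)) x; rewrite (upd_id x (Ordinal hjd)).
Qed.

End ProductCoordinates.

Arguments curried : clear implicits.

Lemma curried_inj_succ_card {K X : Type} {d : nat} {Kap : nat -> Type}
    {lt : forall i : nat, Kap i -> Kap i -> Prop} :
  infinite K -> inj (K * K) K -> inj X K -> is_succ_card K (Kap 0) (lt 0) ->
  (forall i : nat, i.+1 < d -> exists M : Type,
     inj (Kap i -> Prop) M /\ inj (Kap i -> M) M /\ is_succ_card M (Kap i.+1) (lt i.+1)) ->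
  forall j, j < d -> exists M, inj (curried Kap X j) M /\ infinite_succ_card M (Kap j) (lt j).
Proof.
move=> hK hsq hX h0 hsucc; elim=> [|j IH] hj; first by exists K.
have [M' [hcM' [hs' [_ hM']]]] := IH (ltnW hj).
have [M [hPM [hFM hsM]]] := hsucc j hj.
have M'W : inj M' (Kap j) := succ_card_inj hs'.
have M'M : inj M' M := inj_trans M'W (inj_trans inj_pred hPM).
have [w0 [w1 ne]] := infinite_two (inj_trans hM' M'W).
exists M; split; [|split; [exact: hsM | split]].
- exact: inj_trans (inj_fun_codom (inj_trans hcM' M'M)) hFM.
- by apply: (inj_trans _ hFM); exact: inj_square_fun ne.
- exact: inj_trans hM' M'M.
Qed.

Section ProductHomogeneity.
Context {d : nat} {Kap : nat -> Type} {lt : forall i : nat, Kap i -> Kap i -> Prop} {X : Type}.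
Local Notation point := (forall i : 'I_d, Kap i).
Hypothesis hcur : forall j, j < d ->
  exists M, inj (curried Kap X j) M /\ infinite_succ_card M (Kap j) (lt j).

(* Induction on j: the last relevant coordinate is fixed to a stationary fibre of
   the colouring a |-> (restriction of q with coordinate j set to a). *)
Lemma const_on_stationary_below {j} : j <= d -> forall q : point -> X, depends_below q j ->
  exists S : forall i : 'I_d, Kap i -> Prop,
    (forall i : 'I_d, stationary (Kap i) (lt i) (S i)) /\
    (forall i : 'I_d, j <= i -> forall w, S i w) /\
    exists v, forall x, (forall i : 'I_d, S i (x i)) -> q x = v.
Proof.
have inh (i : 'I_d) : inhabited (Kap i).
  by have [M [_ hM]] := hcur _ (ltn_ord i); exact: succ_card_inhabited hM.
pose x0 : point := fun i => epsilon (inh i) (fun _ => True).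
elim: j => [|j IH] hj q hq.
  exists (fun _ _ => True); split; [|split => //].
  - by move=> i; have [M [_ hM]] := hcur _ (ltn_ord i); exact: stationary_setT hM.
  - by exists (q x0) => x _; apply: hq.
have [M [hcM hM]] := hcur _ hj.
pose g a := curry_below x0 j (fun x => q (upd x j a)).
have [c stc] := stationary_fiber _ _ _ hM g hcM.
have [a0 ga0] := stationary_witness _ _ _ hM _ stc.
have hq' a := depends_below_upd q j a hq.
have [S [stS [fullS [v hv]]]] := IH (ltnW hj) _ (hq' a0).
exists (fun i w => S i w /\ forall e : nat_of_ord i = j, g (eq_rect _ Kap w j e) = c).
split; [|split].
- move=> i; case: (eqVneq (nat_of_ord i) j) => [E|ne].
    subst j; apply: stationary_mono stc => w gw; split; first exact: fullS.
    by move=> e; rewrite (eq_irrelevance e erefl).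
  apply: stationary_mono (stS i) => w hw; split => // e.
  by rewrite e eqxx in ne.
- move=> i hi w; split; first exact/fullS/ltnW.
  by move=> e; rewrite e ltnn in hi.
- exists v => x hx; pose jo := Ordinal hj.
  have gx : g (x jo) = g a0 by rewrite ga0; exact: (hx jo).2 erefl.
  have := curry_below_inj x0 j _ _ (ltnW hj) (hq' _) (hq' _) gx x.
  rewrite (upd_id x jo) => ->.
  by apply: hv => i; exact: (hx i).1.
Qed.

Lemma const_on_stationary (q : point -> X) :
  exists S : forall i : 'I_d, Kap i -> Prop,
    (forall i : 'I_d, stationary (Kap i) (lt i) (S i)) /\
    exists v, forall x, (forall i : 'I_d, S i (x i)) -> q x = v.
Proof.
have [S [stS [_ hv]]] := const_on_stationary_below (leqnn d) _ (depends_below_all q).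
by exists S.
Qed.

End ProductHomogeneity.

Theorem mainTheorem4
  (K L : Type)
  (hKinf : infinite K) (hLinf : infinite L)
  (hpow : pow_below_le K L) (hLK : inj L K)
  (d : nat) (hd : 0 < d)
  (Kap : nat -> Type) (lt : forall i : nat, Kap i -> Kap i -> Prop)
  (h0 : is_succ_card K (Kap 0) (lt 0))
  (hsucc : forall i : nat, i.+1 < d ->
     exists M : Type,
       inj (Kap i -> Prop) M /\ inj (Kap i -> M) M /\
       is_succ_card M (Kap i.+1) (lt i.+1))
  (p : (forall i : 'I_d, Kap i) -> small_pfun K L) :
  exists S : forall i : 'I_d, Kap i -> Prop,
    (forall i : 'I_d, stationary (Kap i) (lt i) (S i)) /\
    (forall (x y : forall i : 'I_d, Kap i),
        (forall i, S i (x i)) -> (forall i, S i (y i)) ->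
        forall a b c, proj1_sig (p x) a b -> proj1_sig (p y) a c -> b = c).
Proof.
have hsq := inj_square_of_pow_below hLinf hpow.
have hP := small_pfun_inj _ hKinf hLinf hpow hLK h0.
have hcur := curried_inj_succ_card hKinf hsq hP h0 hsucc.
have [S [stS [v hv]]] := const_on_stationary hcur p.
exists S; split => // x y hx hy a b c.
rewrite (hv x hx) (hv y hy).
exact: (proj1 (proj2_sig v)).
Qed.
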